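(* Let $T$ be a pruned tree on $\{0,1\}$, let $\psi:T\to(0;1)$, and let $(D_t)_{t\in T}$ be a compliant family with $\mu(\operatorname{Int}D_t)=\mu(\operatorname{Cl}D_t)=\psi(t)$ for all $t\in T$. Let $K_T$ and $O_T$ be the closed and open offspring of $T$ determined by $(D_t)_{t\in T}$, and write $\mathcal{D}$ for $\mathcal{D}_{K_T}=\mathcal{D}_{O_T}$. Then for all $z\in2^\omega$: if $z\notin\overline{[T]}$ then $\mathcal{D}(z)\in\{0,1\}$; and if $z=\overline{x}$ with $x\in[T]$, then $\mathcal{D}(z)$ is defined if and only if $\lim_{n\to\infty}\psi(x\restriction n)$ exists, and in that case $\mathcal{D}(z)=\lim_{n\to\infty}\psi(x\restriction n)$.
   Context: $2^{\omega}$ is the Cantor space; $N_s=\{x\in2^\omega:s\subset x\}$; $\mu$ is the coin-tossing measure, $\mu(N_s)=2^{-\mathrm{lh}(s)}$. For measurable $A$, $\mathcal{D}_A(z)=\lim_n\mu(A\cap N_{z\restriction n})/\mu(N_{z\restriction n})$ when the limit exists. $A$ is dualistic if $\mathcal{D}_A(z)$ exists and lies in $\{0,1\}$ for every $z$. A pruned tree on $\{0,1\}$ is a nonempty set of finite binary sequences closed under initial segments in which every node has a proper extension; $[T]$ is its set of infinite branches. The stretch of $s\in 2^{\le\omega}$ is $\overline{s}=s(0)^{(1)}{}^\frown s(1)^{(2)}{}^\frown s(2)^{(3)}{}^\frown\cdots$, where $i^{(k)}$ is the sequence of $k$ copies of $i$ (so $s(j)$ is repeated $j+1$ times); $\overline{X}=\{\overline{x}:x\in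 X\}$. For $n\in\omega$, $\mathrm{Fl}(n)=2^{n+1}\setminus\{0^{(n+1)},1^{(n+1)}\}$ (binary sequences of length $n+1$ that are not constant). For $s$ finite and $X\subseteq2^\omega$, $s^\frown X=\{s^\frown x:x\in X\}$. A family $(D_t)_{t\in T}$ of subsets of $2^\omega$ is compliant if each $D_t$ is dualistic, $\emptyset\ne D_t\ne2^\omega$, and $\mu(\operatorname{Int}D_t)=\mu(\operatorname{Cl}D_t)$. The closed offspring is $K_T=\overline{[T]}\cup\bigcup\{\overline{t}^\frown a^\frown\operatorname{Cl}D_t:t\in T,\ a\in\mathrm{Fl}(\mathrm{lh}\,t)\}$ and the open offspring is $O_T=\bigcup\{\overline{t}^\frown a^\frown\operatorname{Int}D_t:t\in T,\ a\in\mathrm{Fl}(\mathrm{lh}\,t)\}$; these differ by a null set so have the same density function. *)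

From HB Require Import structures.
From mathcomp Require Import all_boot all_order all_algebra.
From mathcomp Require Import all_classical all_reals all_analysis.
Set Implicit Arguments. Unset Strict Implicit. Unset Printing Implicit Defensive.
Import Order.TTheory GRing.Theory Num.Theory.
Import numFieldNormedType.Exports.
Local Open Scope classical_set_scope.
Local Open Scope ring_scope.

Notation CS := cantor_space.

Definition restr (x : CS) (n : nat) : seq bool := mkseq x n.

Definition cyl (s : seq bool) : set CS :=
  [set x | forall i, (i < size s)%N -> x i = nth false s i].

Definition cylinders : set (set CS) := [set A | exists s, A = cyl s].

(** Cantor space with the sigma-algebra generated by the cylinders
    (= the Borel sigma-algebra of 2^omega). *)
Definition BT := g_sigma_algebraType cylinders.

Definition app (s : seq bool) (x : CS) : CS :=
  fun n => if (n < size s)%N then nth false s n else x (n - size s)%N.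
Definition appset (s : seq bool) (X : set CS) : set CS := app s @` X.

Definition fstretch (s : seq bool) : seq bool :=
  flatten [seq nseq j.+1 (nth false s j) | j <- iota 0 (size s)].

(** Stretch of an infinite sequence: the union of the stretches of its
    finite initial segments (fstretch (restr x (k+1)) has length >= k+1). *)
Definition stretch (x : CS) : CS :=
  fun k => nth false (fstretch (restr x k.+1)) k.

Definition stretchset (X : set CS) : set CS := stretch @` X.

Definition Fl (n : nat) : set (seq bool) :=
  [set a | size a = n.+1 /\ a <> nseq n.+1 false /\ a <> nseq n.+1 true].

Definition prefix_of (s t : seq bool) : Prop := s = take (size s) t.

Definition pruned_tree (T : set (seq bool)) : Prop :=
  [/\ T !=set0,
      (forall s t, T t -> prefix_of s t -> T s) &
      (forall t, T t -> exists u, T u /\ (size t < size u)%N /\ prefix_of t u)].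

Definition body (T : set (seq bool)) : set CS :=
  [set x | forall n, T (restr x n)].

Section Measure.
Context {R : realType} (mu : {measure set BT -> \bar R}).

(** Measurability w.r.t. (the completion of) mu. *)
Definition mu_measurable (A : set CS) : Prop :=
  exists B C : set BT, [/\ measurable B, measurable C,
    B `<=` A, A `<=` C & mu (C `\` B) = 0%E].

(** mu(A /\ N_{z|n}) / mu(N_{z|n}); mu(A /\ N) is evaluated through its (outer)
    extension, which agrees with mu (resp. its completion) on measurable sets. *)
Definition dens_ratio (A : set CS) (z : CS) (n : nat) : R :=
  fine ((mu_ext mu) (A `&` cyl (restr z n))) / fine (mu (cyl (restr z n))).

Definition density_is (A : set CS) (z : CS) (r : R) : Prop :=
  dens_ratio A z @ \oo --> r.

Definition density_defined (A : set CS) (z : CS) : Prop :=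
  exists r, density_is A z r.

Definition dualistic (A : set CS) : Prop :=
  mu_measurable A /\
  forall z, exists r, density_is A z r /\ (r = 0 \/ r = 1).

Definition compliant (T : set (seq bool)) (D : seq bool -> set CS) : Prop :=
  forall t, T t ->
    [/\ dualistic (D t), D t !=set0, D t <> setT &
        mu (interior (D t)) = mu (closure (D t))].

End Measure.

Definition closed_offspring (T : set (seq bool)) (D : seq bool -> set CS)
  : set CS :=
  stretchset (body T) `|`
  \bigcup_(t in T) \bigcup_(a in Fl (size t))
     appset (fstretch t ++ a) (closure (D t)).

Definition open_offspring (T : set (seq bool)) (D : seq bool -> set CS)
  : set CS :=
  \bigcup_(t in T) \bigcup_(a in Fl (size t))
     appset (fstretch t ++ a) (interior (D t)).

From HB Require Import structures.
From mathcomp Require Import all_boot all_order all_algebra.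
From mathcomp Require Import all_classical all_reals all_analysis.
From mathcomp Require Import ring lra.
Import Order.TTheory GRing.Theory Num.Theory.
Import numFieldNormedType.Exports.
Local Open Scope classical_set_scope.
Local Open Scope ring_scope.

(* Write F(u) = 2^|u| mu(A /\ N_u) for the relative measure of the offspring A
   in the cylinder N_u, so that D_A(z) = lim_n F(z|n), and F(u) is the mean of
   F(u0) and F(u1).  Above a region stretch(t)^a, a in Fl(|t|), the set A is a
   scaled copy of D_t: there F(stretch(t)^a) = psi(t), and the density of A at
   stretch(t)^a^y is that of D_t at y.  Above stretch(t) with t not in T the set
   A is empty.  A point outside the stretch of [T] enters one of these two kinds
   of cylinders, so its density is 0 or 1.
   Along stretch(t) followed by a constant block c^j, the child ending with the
   other letter starts a non-constant block, above which every cylinder of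
   length |stretch(t c)| is a region; so averaging gives
   F(stretch(t)^c^j) = (1 - 2^-n) psi(t) + 2^-n F(stretch(t c)), n = |t|+1-j;
   in particular |F(stretch t) - psi t| <= 2^-|t|.  Hence along z = stretch x,
   for tri k <= n < tri (k+1) we get
   |F(z|n) - L| <= |psi(x|k) - L| + |psi(x|k+1) - L| + 2^-k, and conversely
   F(z|tri k) is 2^-k-close to psi(x|k): the two sequences converge together,
   to the same limit. *)

Lemma dist_convex_le {R : realDomainType} (e a b L : R) : 0 <= e <= 1 ->
  `|(1 - e) * a + e * b - L| <= `|a - L| + `|b - L|.
Proof.
move=> /andP[e0 e1]; have e1' : 0 <= 1 - e by rewrite subr_ge0.
have -> : (1 - e) * a + e * b - L = (1 - e) * (a - L) + e * (b - L) by ring.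
apply: le_trans (ler_normD _ _) _; rewrite !normrM (ger0_norm e0) (ger0_norm e1').
have := mulr_ge0 e0 (normr_ge0 (a - L)); have := mulr_ge0 e1' (normr_ge0 (b - L)).
lra.
Qed.

Lemma cvg_inv_pow2 {R : realType} : (fun k => (2 ^+ k : R)^-1) @ \oo --> 0.
Proof.
under eq_fun do rewrite -exprVn.
by apply: cvg_expr; rewrite gtr0_norm ?invr_gt0 ?invf_lt1 ?ltr1n.
Qed.

Fixpoint tri (k : nat) : nat := if k is k'.+1 then (tri k' + k'.+1)%N else 0%N.

Lemma triS k : tri k.+1 = (tri k + k.+1)%N. Proof. by []. Qed.

Lemma leq_tri : {homo tri : m n / (m <= n)%N}.
Proof. by apply: homo_leq => [//|n m p|k]; [exact: leq_trans|exact: leq_addr]. Qed.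

Lemma ltn_tri k : (k < tri k.+1)%N.
Proof. by rewrite triS; apply: leq_trans (leq_addl _ _). Qed.

Lemma leq_tri_id k : (k <= tri k)%N.
Proof. by case: k => // k; exact: ltn_tri. Qed.

Lemma tri_bracket n : exists k, (tri k <= n < tri k.+1)%N.
Proof.
elim: n => [|n [k /andP[h1 h2]]]; first by exists 0%N.
have : (n.+1 <= tri k.+1)%N by [].
rewrite leq_eqVlt => /orP[/eqP e|lt]; last first.
  by exists k; rewrite lt andbT; apply: leq_trans h1 _.
exists k.+1; rewrite e leqnn andTb [tri k.+2]triS.
by rewrite -{1}[tri k.+1]addn0 ltn_add2l.
Qed.

Lemma constant_rcons {T : eqType} {w : seq T} {b} : constant (rcons w b) -> constant w.
Proof. by case: w => //= c w; rewrite all_rcons => /andP[]. Qed.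

Lemma nconstant_rcons_nseq j c : (0 < j)%N -> ~~ constant (rcons (nseq j c) (~~ c)).
Proof. by case: j => // j _; rewrite /= all_rcons /=; case: c. Qed.

Lemma FlE {n a} : Fl n a <-> size a = n.+1 /\ ~~ constant a.
Proof.
split=> [[sa [n0 n1]]|[sa nc]].
  split=> //; apply/negP => /(constantP false) [c]; rewrite sa.
  by case: c => e; [exact: n1|exact: n0].
by split=> //; split=> ea; move: nc; rewrite ea constant_nseq.
Qed.

Lemma restrS x n : restr x n.+1 = rcons (restr x n) (x n).
Proof. exact: mkseqS. Qed.

Lemma size_restr x n : size (restr x n) = n.
Proof. exact: size_mkseq. Qed.

Lemma nth_restr x {n i} : (i < n)%N -> nth false (restr x n) i = x i.
Proof. exact: nth_mkseq. Qed.

Lemma take_restr x {m n} : (m <= n)%N -> take m (restr x n) = restr x m.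
Proof.
move=> mn; apply: (@eq_from_nth _ false); rewrite size_takel ?size_restr //.
by move=> i im; rewrite nth_take // !nth_restr //; apply: leq_trans mn.
Qed.

Lemma fstretch_rcons t c :
  fstretch (rcons t c) = fstretch t ++ nseq (size t).+1 c.
Proof.
rewrite /fstretch size_rcons -addn1 iotaD map_cat flatten_cat /= cats0 add0n.
rewrite nth_rcons ltnn eqxx addn1; congr (_ ++ _).
congr flatten; apply/eq_in_map => j; rewrite mem_iota add0n => /andP[_ jt].
by rewrite nth_rcons jt.
Qed.

Lemma size_fstretch t : size (fstretch t) = tri (size t).
Proof.
elim/last_ind: t => // t c IH.
by rewrite fstretch_rcons size_cat IH size_nseq size_rcons.
Qed.

Lemma fstretch_take t m : (m <= size t)%N ->
  take (tri m) (fstretch t) = fstretch (take m t).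
Proof.
elim/last_ind: t m => [|t c IH] m; first by rewrite leqn0 => /eqP->.
rewrite size_rcons leq_eqVlt => /orP[/eqP->|].
  by rewrite -(size_rcons t c) -size_fstretch !take_size.
rewrite ltnS => mt; rewrite fstretch_rcons takel_cat; last first.
  by rewrite size_fstretch leq_tri.
by rewrite IH // -cats1 takel_cat.
Qed.

Lemma fstretch_inj {t t'} : size t = size t' -> fstretch t = fstretch t' -> t = t'.
Proof.
elim/last_ind: t t' => [|t c IH] t'; first by case: t'.
elim/last_ind: t' => [|t' c' _]; first by rewrite size_rcons.
rewrite !size_rcons => -[st]; rewrite !fstretch_rcons st => /eqP.
rewrite eqseq_cat; last by rewrite !size_fstretch st.
by case/andP => /eqP /(IH _ st) -> /eqP [->].
Qed.

Lemma cylE s (z : CS) : cyl s z <-> restr z (size s) = s.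
Proof.
split=> [h|<- i]; last by rewrite size_restr => ilt; rewrite nth_restr.
apply: (@eq_from_nth _ false); rewrite ?size_restr // => i si.
by rewrite nth_restr // h.
Qed.

Lemma cyl_restr (z : CS) n : cyl (restr z n) z.
Proof. by apply/cylE; rewrite size_restr. Qed.

Lemma cyl_nil : cyl [::] = setT.
Proof. by apply/seteqP; split. Qed.

Lemma cyl_prefix {p q} {z : CS} : cyl p z -> cyl q z -> (size p <= size q)%N ->
  p = take (size p) q.
Proof. by move=> /cylE hp /cylE hq pq; rewrite -hq take_restr // hp. Qed.

Lemma cyl_catl {s w} {z : CS} : cyl (s ++ w) z -> cyl s z.
Proof.
move=> h i si; have := h i; rewrite size_cat nth_cat si; apply.
exact: leq_trans si (leq_addr _ _).
Qed.

Lemma cyl_restr_le (z : CS) {m n} : (m <= n)%N -> cyl (restr z n) `<=` cyl (restr z m).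
Proof.
by move=> mn y; rewrite -(cat_take_drop m (restr z n)) take_restr //; exact: cyl_catl.
Qed.

Lemma cyl_rcons u b (z : CS) : cyl (rcons u b) z <-> cyl u z /\ z (size u) = b.
Proof.
rewrite -cats1; split=> [h|[cu zb] i].
  by split; [exact: cyl_catl h|rewrite h ?size_cat ?addn1 // nth_cat ltnn subnn].
rewrite size_cat addn1 ltnS leq_eqVlt => /orP[/eqP->|iu].
  by rewrite nth_cat ltnn subnn.
by rewrite nth_cat iu cu.
Qed.

Lemma setI_closed_cylinders : setI_closed (cylinders `|` [set set0]).
Proof.
move=> A B [[p ->]|->]; last by rewrite set0I; right.
move=> [[q ->]|->]; last by rewrite setI0; right.
have [[z [cp cq]]|] := pselect (exists z, cyl p z /\ cyl q z); last first.
  by move=> /forallNP h; right; apply/seteqP; split => // z [? ?]; apply: (h z).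
left; wlog pq : p q z cp cq / (size p <= size q)%N.
  move=> hw; case: (leqP (size p) (size q)) => [|/ltnW] h; first exact: (hw p q z).
  by rewrite setIC; exact: (hw q p z).
exists q; apply/seteqP; split=> [y []//|y cyq]; split=> //.
rewrite -(cat_take_drop (size p) q) -(cyl_prefix cp cq pq) in cyq.
exact: cyl_catl cyq.
Qed.

Lemma restr_app s y n : restr (app s y) (size s + n) = s ++ restr y n.
Proof.
apply: (@eq_from_nth _ false); rewrite ?size_cat !size_restr // => i ilt.
rewrite nth_restr // nth_cat /app; case: ifP => // h.
by rewrite nth_restr // -(ltn_add2l (size s)) subnKC // leqNgt h.
Qed.

Lemma cyl_app s y w : cyl (s ++ w) (app s y) <-> cyl w y.
Proof.
rewrite !cylE size_cat restr_app; split; last by move->.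
by move/eqP; rewrite eqseq_cat ?size_restr // eqxx => /eqP.
Qed.

Lemma cyl_app0 s y : cyl s (app s y).
Proof. by have := (cyl_app s y [::]).2; rewrite cats0; apply. Qed.

Definition shiftN (m : nat) (z : CS) : CS := fun n => z (n + m)%N.

Lemma app_shiftN {s z} : cyl s z -> app s (shiftN (size s) z) = z.
Proof.
move=> h; apply/funext => n; rewrite /app /shiftN; case: ifP => [ns|].
  by rewrite h.
by move/negbT; rewrite -leqNgt => /subnK ->.
Qed.

Lemma shiftN_app s y : shiftN (size s) (app s y) = y.
Proof. by apply/funext => n; rewrite /shiftN /app ltnNge leq_addl /= addnK. Qed.

Lemma appsetE s (X : set CS) : appset s X = cyl s `&` shiftN (size s) @^-1` X.
Proof.
apply/seteqP; split.
  by move=> _ [y Xy <-]; split; [exact: cyl_app0|rewrite /= shiftN_app].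
by move=> z [cz Xz]; exists (shiftN (size s) z); rewrite ?app_shiftN.
Qed.

Lemma cyl_cat s w : cyl (s ++ w) = appset s (cyl w).
Proof.
apply/seteqP; split=> [z czw|_ [y cy <-]]; last exact/cyl_app.
have cz := cyl_catl czw; exists (shiftN (size s) z); last exact: app_shiftN.
by apply/(cyl_app s); rewrite app_shiftN.
Qed.

Lemma restr_stretch x k : restr (stretch x) (tri k) = fstretch (restr x k).
Proof.
apply: (@eq_from_nth _ false); rewrite ?size_restr ?size_fstretch ?size_restr //.
move=> i ik; rewrite nth_restr // /stretch.
have le_m n : (n <= maxn i.+1 k)%N ->
    fstretch (restr x n) = take (tri n) (fstretch (restr x (maxn i.+1 k))).
  by move=> nm; rewrite fstretch_take ?size_restr // take_restr.
by rewrite le_m ?leq_maxl // [in RHS]le_m ?leq_maxr // !nth_take // ltn_tri.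
Qed.

Lemma restr_stretch_block x k j : (j <= k.+1)%N ->
  restr (stretch x) (tri k + j) = fstretch (restr x k) ++ nseq j (x k).
Proof.
move=> jk; rewrite -(@take_restr (stretch x) (tri k + j) (tri k.+1)); last first.
  by rewrite triS leq_add2l.
rewrite restr_stretch restrS fstretch_rcons size_restr take_cat size_fstretch.
by rewrite size_restr ltnNge leq_addr /= addKn -[x k :: _]/(nseq k.+1 (x k)) take_nseq.
Qed.

Lemma cyl_fstretch_stretch x m : cyl (fstretch (restr x m)) (stretch x).
Proof. by apply/cylE; rewrite size_fstretch size_restr restr_stretch. Qed.

Lemma cyl_fstretch_prefix {t t'} {z : CS} : (size t <= size t')%N ->
  cyl (fstretch t) z -> cyl (fstretch t') z -> t = take (size t) t'.
Proof.
move=> le c c'; have sz : (size (fstretch t) <= size (fstretch t'))%N.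
  by rewrite !size_fstretch leq_tri.
have := cyl_prefix c c' sz; rewrite size_fstretch fstretch_take // => /fstretch_inj.
by apply; rewrite size_takel.
Qed.

Lemma cyl_fstretch_block {t a t'} {z : CS} : size a = (size t).+1 ->
  (size t < size t')%N -> cyl (fstretch t ++ a) z -> cyl (fstretch t') z ->
  constant a.
Proof.
move=> sa lt c c'; have sz : (size (fstretch t ++ a) <= size (fstretch t'))%N.
  by rewrite size_cat !size_fstretch sa -triS leq_tri.
have := cyl_prefix c c' sz.
rewrite size_cat size_fstretch sa -triS fstretch_take // (take_nth false lt).
rewrite fstretch_rcons size_take lt => /eqP; rewrite eqseq_cat; last first.
  by rewrite !size_fstretch size_take lt.
by case/andP => _ /eqP ->; exact: constant_nseq.
Qed.

Lemma stretch_exit {T : set (seq bool)} {z : CS} : T [::] -> ~ stretchset (body T) z ->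
  exists2 t, T t &
    (exists2 a, Fl (size t) a & cyl (fstretch t ++ a) z) \/
    (exists2 c, ~ T (rcons t c) & cyl (fstretch (rcons t c)) z).
Proof.
move=> T_nil nz; pose xz : CS := fun k => z (tri k).
pose P k := restr z (tri k) = fstretch (restr xz k) /\ T (restr xz k).
have [k [[e Tk] nPk1]] : exists k, P k /\ ~ P k.+1.
  apply: contrapT => hn.
  have allP k : P k.
    by elim: k => [|k IH]; [split|apply: contrapT => h; apply: hn; exists k].
  apply: nz; exists xz; first by move=> n; case: (allP n).
  apply/funext => n; have := (allP n.+1).1; rewrite -restr_stretch => e.
  by rewrite -(nth_restr (stretch xz) (ltn_tri n)) -e nth_restr // ltn_tri.
set t := restr xz k; set w := drop (tri k) (restr z (tri k.+1)).
have ew : restr z (tri k.+1) = fstretch t ++ w.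
  by rewrite -e -(@take_restr z (tri k) (tri k.+1)) ?cat_take_drop // leq_tri.
have cw : cyl (fstretch t ++ w) z by rewrite -ew; exact: cyl_restr.
have sw : size w = (size t).+1 by rewrite size_drop !size_restr triS addKn.
exists t => //; have [/(constantP false) [c wc]|nc] := boolP (constant w); last first.
  by left; exists w => //; exact/FlE.
have ec : c = xz k.
  have <- : nth false w 0 = c by rewrite wc nth_nseq sw.
  rewrite /w nth_drop addn0 nth_restr //.
  by rewrite triS -[X in (X < _)%N]addn0 ltn_add2l.
right; exists c; last by rewrite fstretch_rcons -sw -wc.
by move=> Tt1; apply: nPk1; rewrite /P restrS -ec -/t fstretch_rcons -sw -wc -ew.
Qed.

Lemma measurable_cyl s : measurable (cyl s : set BT).
Proof. by apply: sub_sigma_algebra; exists s. Qed.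

Lemma measurable_setIcyl {X : set BT} u : measurable X -> measurable (X `&` cyl u : set BT).
Proof. by move=> mX; apply: measurableI => //; exact: measurable_cyl. Qed.

Lemma measurable_bigcup_cyl (P : set (seq bool)) :
  measurable (\bigcup_(v in P) cyl v : set BT).
Proof.
rewrite bigcup_mkcond; apply: countable_bigcupT_measurable; first exact: countableP.
by move=> v; case: ifP => _; [exact: measurable_cyl|exact: measurable0].
Qed.

Lemma nbhs_cyl {x : CS} {U} : nbhs x U -> exists n, cyl (restr x n) `<=` U.
Proof.
move=> Ux; apply: contrapT => /forallNP h.
have /choice[y hy] : forall n, exists y, cyl (restr x n) y /\ ~ U y.
  move=> n; have := h n; apply: contra_notP => /forallNP h2 z cz.
  by have /not_andP[//|/contrapT] := h2 z.
have hc : (y @ \oo) --> (x : {ptws nat -> bool}).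
  apply/pointwise_cvgP => t; apply/discrete_cvg; exists t.+1 => // n /= tn.
  by have [c _] := hy n; rewrite c ?size_restr // nth_restr.
by have [N _ /(_ N (leqnn N))] := hc U Ux; case: (hy N).
Qed.

Lemma measurable_open (U : set CS) : open U -> measurable (U : set BT).
Proof.
move=> oU; have -> : U = \bigcup_(v in [set v | cyl v `<=` U]) cyl v.
  apply/seteqP; split=> [x Ux|x [v /= vU /vU //]].
  have [n hn] := nbhs_cyl (open_nbhs_nbhs (conj oU Ux)).
  by exists (restr x n) => //; exact: cyl_restr.
exact: measurable_bigcup_cyl.
Qed.

Lemma measurable_closed (C : set CS) : closed C -> measurable (C : set BT).
Proof.
rewrite -openC => /measurable_open mC.
by rewrite -[C]setCK; exact: measurableC.
Qed.

Lemma measurable_shiftN m : measurable_fun [set: BT] (shiftN m : BT -> BT).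
Proof.
apply: (@measurability _ _ BT BT setT _ cylinders) => //.
move=> _ [_ [w ->] <-]; rewrite setTI.
have -> : shiftN m @^-1` cyl w =
    \bigcup_(p in [set p | size p = (m + size w)%N /\ drop m p = w]) cyl p.
  apply/seteqP; split=> [z /= czw|z [p [sp dp] cp] i iw /=].
    exists (restr z (m + size w)); last exact: cyl_restr.
    split; first by rewrite size_restr.
    apply: (@eq_from_nth _ false); first by rewrite size_drop size_restr addKn.
    move=> i; rewrite size_drop size_restr addKn => iw.
    by rewrite nth_drop nth_restr ?ltn_add2l // addnC; apply: czw.
  rewrite /shiftN cp; last by rewrite sp [(m + size w)%N]addnC ltn_add2r.
  by rewrite -dp nth_drop addnC.
exact: measurable_bigcup_cyl.
Qed.

Lemma measurable_appset s (X : set BT) : measurable X ->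
  measurable (appset s X : set BT).
Proof.
move=> mX; rewrite appsetE; apply: measurableI; first exact: measurable_cyl.
by rewrite -[X in measurable X]setTI; apply: measurable_shiftN.
Qed.

Lemma BT_measurableE : @measurable _ BT = <<s cylinders `|` [set set0] >>.
Proof.
apply/seteqP; split; first by apply: sub_sigma_algebra2 => A hA; left.
apply: smallest_sub; first exact: smallest_sigma_algebra.
by move=> A [hA|->]; [exact: sub_sigma_algebra|exact: measurable0].
Qed.

Section AppsetMeasure.
Context {R : realType} (mu : {measure set BT -> \bar R}) (s : seq bool).

Definition appset_measure (X : set BT) : \bar R :=
  mu (cyl s `&` shiftN (size s) @^-1` X).

Let measurable_cyl_shiftN (X : set BT) : measurable X ->
  measurable (cyl s `&` shiftN (size s) @^-1` X : set BT).
Proof. by rewrite -appsetE; exact: measurable_appset. Qed.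

Let appset_measure0 : appset_measure set0 = 0%E.
Proof. by rewrite /appset_measure preimage_set0 setI0 measure0. Qed.

Let appset_measure_ge0 X : (0 <= appset_measure X)%E.
Proof. exact: measure_ge0. Qed.

Let appset_measure_sigma_additive : semi_sigma_additive appset_measure.
Proof.
move=> F mF tF mUF; rewrite /appset_measure preimage_bigcup setI_bigcupr.
apply: measure_semi_sigma_additive.
- by move=> n; apply: measurable_cyl_shiftN.
- apply/trivIsetP => /= i j _ _ ij.
  move/trivIsetP : tF => /(_ _ _ Logic.I Logic.I ij) h.
  by rewrite setIACA -preimage_setI h preimage_set0 !setI0.
- by rewrite -setI_bigcupr -preimage_bigcup; apply: measurable_cyl_shiftN.
Qed.

HB.instance Definition _ := isMeasure.Build _ _ _ appset_measure
  appset_measure0 appset_measure_ge0 appset_measure_sigma_additive.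

End AppsetMeasure.

Definition offspring_regions (T : set (seq bool)) (Y : seq bool -> set CS) : set CS :=
  \bigcup_(t in T) \bigcup_(a in Fl (size t)) appset (fstretch t ++ a) (Y t).

Section CoinTossing.
Context {R : realType} (mu : {measure set BT -> \bar R}).
Hypothesis mu_cyl : forall s : seq bool, mu (cyl s) = ((2 ^+ size s)^-1)%:E.

Lemma measure_lty (X : set BT) : measurable X -> (mu X < +oo)%E.
Proof.
move=> mX; apply: (@le_lt_trans _ _ (mu (cyl [::]))); last by rewrite mu_cyl ltry.
by apply: le_measure; rewrite ?inE //; exact: measurable_cyl.
Qed.

Lemma measure_appset s (X : set BT) : measurable X ->
  mu (appset s X) = (((2 ^+ size s)^-1)%:E * mu X)%E.
Proof.
have h : 0 <= ((2 ^+ size s)^-1 : R) by rewrite invr_ge0 exprn_ge0.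
(* Both sides are measures that agree on the pi-system of cylinders. *)
move=> mX; rewrite appsetE; change (appset_measure mu s X = mscale (NngNum h) mu X).
apply: (@measure_unique _ _ _ _ (fun=> setT) BT_measurableE setI_closed_cylinders
  _ _ (appset_measure mu s)) => //.
- by move=> _; left; exists [::]; rewrite cyl_nil.
- by rewrite bigcup_const.
- move=> A [[w ->]|->]; last by rewrite !measure0.
  rewrite /= /appset_measure -appsetE -cyl_cat !mu_cyl size_cat.
  by rewrite /mscale /= mu_cyl -EFinM exprD invfM.
- move=> _; apply: measure_lty; apply: measurableI; first exact: measurable_cyl.
  by rewrite -[X in measurable X]setTI; exact: measurable_shiftN.
Qed.

Definition rel_measure (X : set CS) (u : seq bool) : R :=
  fine (mu_ext mu (X `&` cyl u)) * 2 ^+ size u.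

Lemma dens_ratioE X z n : dens_ratio mu X z n = rel_measure X (restr z n).
Proof. by rewrite /dens_ratio /rel_measure mu_cyl /= size_restr invrK. Qed.

Lemma density_is_rel_measure {X X' z r} :
  (forall u, rel_measure X u = rel_measure X' u) ->
  density_is mu X z r -> density_is mu X' z r.
Proof.
move=> e; rewrite /density_is; suff -> : dens_ratio mu X' z = dens_ratio mu X z by [].
by apply/funext => n; rewrite !dens_ratioE e.
Qed.

Lemma mu_ext_setIcyl_le X u : (mu_ext mu (X `&` cyl u) <= ((2 ^+ size u)^-1)%:E)%E.
Proof.
rewrite -mu_cyl -measurable_mu_extE; last exact: measurable_cyl.
by apply: le_mu_ext; apply: subIsetr.
Qed.

Lemma mu_ext_setIcyl_fin X u : mu_ext mu (X `&` cyl u) \is a fin_num.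
Proof.
rewrite ge0_fin_numE ?mu_ext_ge0 //.
by apply: le_lt_trans (mu_ext_setIcyl_le X u) _; rewrite ltry.
Qed.

Lemma rel_measure_ge0 X u : 0 <= rel_measure X u.
Proof. by rewrite mulr_ge0 ?exprn_ge0 // fine_ge0 // mu_ext_ge0. Qed.

Lemma rel_measure_le1 X u : rel_measure X u <= 1.
Proof.
rewrite /rel_measure -(@ler_pM2r _ ((2 ^+ size u)^-1)) ?invr_gt0 ?exprn_gt0 //.
rewrite -mulrA divff ?expf_neq0 // mulr1 mul1r.
have := mu_ext_setIcyl_le X u; have := mu_ext_setIcyl_fin X u.
by case: (mu_ext mu _) => //= r _; rewrite lee_fin.
Qed.

Lemma rel_measure_rcons X u c :
  rel_measure X u = (rel_measure X (rcons u c) + rel_measure X (rcons u (~~ c))) / 2.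
Proof.
have e1 : X `&` cyl u `&` cyl (rcons u c) = X `&` cyl (rcons u c).
  rewrite -setIA; congr (_ `&` _); apply/seteqP; split=> [z [] //|z cc].
  by split => //; case/cyl_rcons: cc.
have e2 : X `&` cyl u `&` ~` cyl (rcons u c) = X `&` cyl (rcons u (~~ c)).
  rewrite -setIA; congr (_ `&` _); apply/seteqP; split.
    move=> z [cu ncc]; apply/cyl_rcons; split => //.
    apply: contra_notP ncc => zc; apply/cyl_rcons; split => //.
    by move: zc; case: (z (size u)); case: (c).
  by move=> z /cyl_rcons [cu zc]; split => // /cyl_rcons [_]; rewrite zc; case: (c).
have hc := caratheodory_measurable_mu_ext mu (measurable_cyl (rcons u c)) (X `&` cyl u).
rewrite /rel_measure hc e1 e2 fineD ?mu_ext_setIcyl_fin // !size_rcons exprS.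
by field.
Qed.

Lemma rel_measureE_measurable X u : measurable (X `&` cyl u : set BT) ->
  rel_measure X u = fine (mu (X `&` cyl u)) * 2 ^+ size u.
Proof. by move=> m; rewrite /rel_measure measurable_mu_extE. Qed.

Lemma rel_measure_appset {X s} {Y : set CS} {w} : measurable (Y : set BT) ->
  X `&` cyl (s ++ w) = appset s (Y `&` cyl w) -> rel_measure X (s ++ w) = rel_measure Y w.
Proof.
move=> mY e; have mYw := measurable_setIcyl w mY.
rewrite rel_measureE_measurable; last by rewrite e; exact: measurable_appset.
rewrite e measure_appset // rel_measureE_measurable //.
have hf : mu (Y `&` cyl w) \is a fin_num.
  by rewrite -measurable_mu_extE // mu_ext_setIcyl_fin.
by rewrite fineM // size_cat exprD /=; field; rewrite expf_neq0.
Qed.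

Lemma rel_measure_squeeze {B X C : set CS} :
  measurable (B : set BT) -> measurable (C : set BT) -> B `<=` X -> X `<=` C ->
  mu (C `\` B) = 0%E ->
  forall u, rel_measure B u = rel_measure X u /\ rel_measure C u = rel_measure X u.
Proof.
move=> mB mC BX XC null u.
have mBu := measurable_setIcyl u mB; have mCu := measurable_setIcyl u mC.
have eBC : mu_ext mu (C `&` cyl u) = mu_ext mu (B `&` cyl u).
  rewrite !measurable_mu_extE //; apply/eqP; rewrite eq_le; apply/andP; split; last first.
    by apply: le_measure; rewrite ?inE //; apply: setSI; exact: subset_trans BX XC.
  apply: (@le_trans _ _ (mu ((B `&` cyl u) `|` (C `\` B)))).
    apply: le_measure; rewrite ?inE //; first by apply: measurableU => //; exact: measurableD.
    by move=> z [Cz cz]; have [Bz|nBz] := pselect (B z); [left|right].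
  apply: le_trans (measureU2 mu mBu (measurableD mC mB)) _.
  by rewrite [X in (_ + X)%E](_ : _ = 0%E) ?adde0 //; exact: null.
have lBX : (mu_ext mu (B `&` cyl u) <= mu_ext mu (X `&` cyl u))%E.
  by apply: le_mu_ext; exact: setSI.
have lXC : (mu_ext mu (X `&` cyl u) <= mu_ext mu (C `&` cyl u))%E.
  by apply: le_mu_ext; exact: setSI.
have eBX : mu_ext mu (X `&` cyl u) = mu_ext mu (B `&` cyl u).
  by apply/eqP; rewrite eq_le lBX -eBC lXC.
by rewrite /rel_measure eBC eBX.
Qed.

Lemma dualistic_interior_closure (Dt : set CS) :
  mu (interior Dt) = mu (closure Dt) -> dualistic mu Dt ->
  dualistic mu (interior Dt) /\ dualistic mu (closure Dt).
Proof.
move=> eIC [_ dual].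
have mI : measurable (interior Dt : set BT) by apply: measurable_open; exact: open_interior.
have mC : measurable (closure Dt : set BT) by apply: measurable_closed; exact: closed_closure.
have null : mu (closure Dt `\` interior Dt) = 0%E.
  rewrite measureD // ?measure_lty // setIidr; last first.
    by move=> z /interior_subset /subset_closure.
  rewrite [X in (_ - X)%E](_ : _ = mu (closure Dt)); last exact: eIC.
  by rewrite subee // ge0_fin_numE ?measure_ge0 ?measure_lty.
have sq := rel_measure_squeeze mI mC (@interior_subset _ Dt) (@subset_closure _ Dt) null.
have dualistic_of X : measurable (X : set BT) ->
    (forall u, rel_measure Dt u = rel_measure X u) -> dualistic mu X.
  move=> mX e; split; first by exists X, X; split => //; rewrite setDv measure0.
  move=> z; have [r [dr r01]] := dual z.
  by exists r; split => //; exact: density_is_rel_measure dr.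
by split; apply: dualistic_of => // u; have [] := sq u.
Qed.

Section Offspring.
Context {T : set (seq bool)} {Y : seq bool -> set CS} {A : set CS} {psi : seq bool -> R}.
Hypothesis T_nil : T [::].
Hypothesis T_prefix : forall s t, T t -> prefix_of s t -> T s.
Hypothesis A_sub : A `<=` stretchset (body T) `|` offspring_regions T Y.
Hypothesis regions_sub : offspring_regions T Y `<=` A.
Hypothesis Y_measurable : forall {t}, T t -> measurable (Y t : set BT).
Hypothesis mu_Y : forall {t}, T t -> mu (Y t) = (psi t)%:E.
Hypothesis psi01 : forall {t}, T t -> 0 <= psi t <= 1.
Hypothesis Y_dualistic : forall {t}, T t -> dualistic mu (Y t).

Lemma offspring_setI_cyl_fstretch {t} : ~ T t -> A `&` cyl (fstretch t) = set0.
Proof.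
move=> nT; apply/seteqP; split => // z [/A_sub [[x bx <-]|[t' T't [a Fa [y _ <-]]]] cz].
  apply: nT; have st : (size t <= size (restr x (size t)))%N by rewrite size_restr.
  by rewrite (cyl_fstretch_prefix st cz (cyl_fstretch_stretch x _)) take_restr.
have [sa /negP nca] := FlE.1 Fa; have c := cyl_app0 (fstretch t' ++ a) y.
case: (ltnP (size t') (size t)) => lt; first exact/nca/(cyl_fstretch_block sa lt c cz).
by apply/nT/(T_prefix _ _ T't); exact: cyl_fstretch_prefix lt cz (cyl_catl c).
Qed.

Lemma offspring_setI_cyl_region t a w : T t -> Fl (size t) a ->
  A `&` cyl ((fstretch t ++ a) ++ w) = appset (fstretch t ++ a) (Y t `&` cyl w).
Proof.
move=> Tt Fa; have [sa /negP nca] := FlE.1 Fa.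
apply/seteqP; split=> [z|_ [y [Yy cy] <-]]; last first.
  split; last exact/cyl_app.
  by apply: regions_sub; exists t => //; exists a => //; exists y.
move=> [/A_sub [[x bx <-]|[t' T't [a' Fa' [y Yy <-]]]] cz]; have c := cyl_catl cz.
  have lt : (size t < size (restr x (size t).+1))%N by rewrite size_restr.
  by case/nca: (cyl_fstretch_block sa lt c (cyl_fstretch_stretch x _)).
have [sa' /negP nca'] := FlE.1 Fa'; have c' := cyl_app0 (fstretch t' ++ a') y.
case: (ltngtP (size t') (size t)) => h.
- by case/nca': (cyl_fstretch_block sa' h c' (cyl_catl c)).
- by case/nca: (cyl_fstretch_block sa h c (cyl_catl c')).
have e : fstretch t ++ a = fstretch t' ++ a'.
  have sz : (size (fstretch t ++ a) <= size (fstretch t' ++ a'))%N.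
    by rewrite !size_cat !size_fstretch sa sa' h.
  by rewrite (cyl_prefix c c' sz) take_oversize // !size_cat !size_fstretch sa sa' h.
move: (e) => /eqP; rewrite eqseq_cat; last by rewrite !size_fstretch h.
case/andP => /eqP /(fstretch_inj (esym h)) et _.
rewrite -e; exists y; last by [].
by split; [rewrite et|move: cz; rewrite -e => /cyl_app].
Qed.

Local Notation F := (rel_measure A).

Lemma rel_measure_region t a w : T t -> Fl (size t) a ->
  F ((fstretch t ++ a) ++ w) = rel_measure (Y t) w.
Proof.
move=> Tt Fa; apply: rel_measure_appset; first exact: Y_measurable.
exact: offspring_setI_cyl_region.
Qed.

Lemma rel_measure_region_nil t a : T t -> Fl (size t) a -> F (fstretch t ++ a) = psi t.
Proof.
move=> Tt Fa; rewrite -[_ ++ a]cats0 rel_measure_region // /rel_measure cyl_nil setIT.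
rewrite measurable_mu_extE; last exact: Y_measurable.
by rewrite [X in fine X](_ : _ = (psi t)%:E) ?expr0 ?mulr1 //; exact: mu_Y.
Qed.

Lemma rel_measure_nconstant t w : T t -> (size w <= (size t).+1)%N -> ~~ constant w ->
  F (fstretch t ++ w) = psi t.
Proof.
move=> Tt sw; have [n] : exists n, (size w + n = (size t).+1)%N.
  by exists ((size t).+1 - size w)%N; rewrite subnKC.
elim: n w {sw} => [|n IH] w sw nc.
  by apply: rel_measure_region_nil => //; apply/FlE; rewrite -sw addn0.
have IHb b : F (fstretch t ++ rcons w b) = psi t.
  by apply: IH; [rewrite size_rcons addSnnS|apply: contra nc; exact: constant_rcons].
by rewrite (rel_measure_rcons _ _ false) !rcons_cat !IHb; field.
Qed.

Lemma rel_measure_constant t c n j : T t -> (j + n = (size t).+1)%N -> (0 < j)%N ->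
  F (fstretch t ++ nseq j c) =
  (1 - (2 ^+ n)^-1) * psi t + (2 ^+ n)^-1 * F (fstretch (rcons t c)).
Proof.
move=> Tt; elim: n j => [|n IH] j.
  rewrite addn0 => -> _; rewrite -fstretch_rcons expr0 invr1 subrr mul0r add0r.
  by rewrite mul1r.
move=> jn j0; rewrite (rel_measure_rcons _ _ c).
have -> : rcons (fstretch t ++ nseq j c) c = fstretch t ++ nseq j.+1 c.
  by rewrite rcons_cat -cats1 -addn1 nseqD.
rewrite IH ?addSnnS // rcons_cat rel_measure_nconstant ?nconstant_rcons_nseq //; last first.
  by rewrite size_rcons size_nseq -jn addnS ltnS leq_addr.
by rewrite exprS; field; rewrite expf_neq0.
Qed.

Lemma rel_measure_fstretch {t} : T t -> `|F (fstretch t) - psi t| <= (2 ^+ size t)^-1.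
Proof.
move=> Tt; rewrite (rel_measure_rcons _ _ false) -!cats1.
rewrite !(rel_measure_constant _ _ (size t) 1 Tt) ?add1n //=.
set e := (2 ^+ size t)^-1.
set F0 := F (fstretch (rcons t false)); set F1 := F (fstretch (rcons t true)).
have -> : ((1 - e) * psi t + e * F0 + ((1 - e) * psi t + e * F1)) / 2 - psi t =
  e * ((F0 + F1) / 2 - psi t) by field.
have e0 : 0 < e by rewrite invr_gt0 exprn_gt0.
have /andP[p0 p1] := psi01 Tt.
have := rel_measure_ge0 A (fstretch (rcons t false)).
have := rel_measure_le1 A (fstretch (rcons t false)).
have := rel_measure_ge0 A (fstretch (rcons t true)).
have := rel_measure_le1 A (fstretch (rcons t true)).
rewrite -/F0 -/F1 => *; have avg : `|(F0 + F1) / 2 - psi t| <= 1.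
  by rewrite ler_norml; apply/andP; split; lra.
by rewrite normrM gtr0_norm // -[leRHS]mulr1 ler_wpM2l // ltW.
Qed.

Lemma rel_measure_stretch_dist x L k j : body T x -> (j <= k.+1)%N ->
  `|F (restr (stretch x) (tri k + j)) - L| <=
  `|psi (restr x k) - L| + `|psi (restr x k.+1) - L| + (2 ^+ k)^-1.
Proof.
move=> bx jk; rewrite restr_stretch_block //.
have near_k := rel_measure_fstretch (bx k); have near_k1 := rel_measure_fstretch (bx k.+1).
rewrite !size_restr in near_k near_k1; rewrite exprS invfM in near_k1.
have pow_gt0 : 0 < (2 ^+ k : R)^-1 by rewrite invr_gt0 exprn_gt0.
have dist_ge0 := normr_ge0 (psi (restr x k.+1) - L).
have [->|j0] := posnP j.
  by rewrite cats0; have := ler_distD (psi (restr x k)) (F (fstretch (restr x k))) L; lra.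
rewrite (rel_measure_constant _ _ (k.+1 - j) _ (bx k)) ?size_restr ?subnKC // -restrS.
have eps01 : 0 <= (2 ^+ (k.+1 - j) : R)^-1 <= 1.
  by rewrite invr_ge0 exprn_ge0 //= invf_le1 ?exprn_gt0 // exprn_ege1 // ler1n.
have := dist_convex_le _ (psi (restr x k)) (F (fstretch (restr x k.+1))) L eps01.
have := ler_distD (psi (restr x k.+1)) (F (fstretch (restr x k.+1))) L; lra.
Qed.

Lemma cvg_rel_measure_stretch x (L : R) : body T x ->
  (fun n => psi (restr x n)) @ \oo --> L ->
  (fun n => F (restr (stretch x) n)) @ \oo --> L.
Proof.
move=> bx hp; apply/cvgrPdist_le => e e0; have e3 : 0 < e / 3 by rewrite divr_gt0.
move/cvgrPdist_le: hp => /(_ _ e3) [M1 _ hM1].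
move/cvgrPdist_le: (@cvg_inv_pow2 R) => /(_ _ e3) [M2 _ hM2].
exists (tri (maxn M1 M2)) => // n /= hn; have [k /andP[k1 k2]] := tri_bracket n.
have kM : (maxn M1 M2 <= k)%N.
  by rewrite leqNgt; apply/negP => /leq_tri lt; have := leq_trans lt hn; rewrite leqNgt k2.
have jk : (n - tri k <= k.+1)%N by rewrite leq_subLR -triS ltnW.
have := rel_measure_stretch_dist x L k _ bx jk; rewrite subnKC //.
have := hM1 k (leq_trans (leq_maxl _ _) kM).
have := hM1 k.+1 (leq_trans (leq_maxl _ _) (leqW kM)).
have := hM2 k (leq_trans (leq_maxr _ _) kM).
have pow_gt0 : 0 < (2 ^+ k : R)^-1 by rewrite invr_gt0 exprn_gt0.
by rewrite /= sub0r normrN (gtr0_norm pow_gt0) !(distrC L); lra.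
Qed.

Lemma cvg_psi_of_rel_measure_stretch x (L : R) : body T x ->
  (fun n => F (restr (stretch x) n)) @ \oo --> L ->
  (fun n => psi (restr x n)) @ \oo --> L.
Proof.
move=> bx hF; apply/cvgrPdist_le => e e0; have e2 : 0 < e / 2 by rewrite divr_gt0.
move/cvgrPdist_le: hF => /(_ _ e2) [M1 _ hM1].
move/cvgrPdist_le: (@cvg_inv_pow2 R) => /(_ _ e2) [M2 _ hM2].
exists (maxn M1 M2) => // k /= hk.
have := hM1 (tri k) (leq_trans (leq_trans (leq_maxl _ _) hk) (leq_tri_id k)).
have := hM2 k (leq_trans (leq_maxr _ _) hk).
have := rel_measure_fstretch (bx k); rewrite size_restr.
have := ler_distD (F (fstretch (restr x k))) L (psi (restr x k)).
have pow_gt0 : 0 < (2 ^+ k : R)^-1 by rewrite invr_gt0 exprn_gt0.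
by rewrite /= restr_stretch sub0r normrN (gtr0_norm pow_gt0); lra.
Qed.

Lemma density_is_stretch {x} (L : R) : body T x ->
  density_is mu A (stretch x) L <-> (fun n => psi (restr x n)) @ \oo --> L.
Proof.
move=> bx; rewrite /density_is.
have -> : dens_ratio mu A (stretch x) = fun n => F (restr (stretch x) n).
  by apply/funext => n; rewrite dens_ratioE.
by split; [exact: cvg_psi_of_rel_measure_stretch|exact: cvg_rel_measure_stretch].
Qed.

Lemma density_is_region t a y r : T t -> Fl (size t) a ->
  density_is mu (Y t) y r -> density_is mu A (app (fstretch t ++ a) y) r.
Proof.
move=> Tt Fa; rewrite /density_is -[X in _ -> X](cvg_shiftn (size (fstretch t ++ a))).
suff -> : (fun n => dens_ratio mu A (app (fstretch t ++ a) y) (n + size (fstretch t ++ a))) =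
  dens_ratio mu (Y t) y by [].
by apply/funext => m; rewrite !dens_ratioE addnC restr_app rel_measure_region.
Qed.

Lemma density_is_outside_tree {t z} : ~ T t -> cyl (fstretch t) z -> density_is mu A z 0.
Proof.
move=> nT cz; rewrite /density_is -(cvg_shiftn (size (fstretch t))).
suff -> : (fun n => dens_ratio mu A z (n + size (fstretch t))) = fun=> 0 by exact: cvg_cst.
apply/funext => m; rewrite dens_ratioE /rel_measure.
have -> : A `&` cyl (restr z (m + size (fstretch t))) = set0.
  rewrite -subset0 -(offspring_setI_cyl_fstretch nT); apply: setIS => u.
  by move/(cyl_restr_le z (leq_addl _ _)); move/cylE: cz => ->.
by rewrite measurable_mu_extE // measure0 mul0r.
Qed.

Lemma density_off_stretch z : ~ stretchset (body T) z ->
  exists r, density_is mu A z r /\ (r = 0 \/ r = 1).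
Proof.
move=> nz; have [t Tt [[a Fa cz]|[c nTc cz]]] := stretch_exit T_nil nz.
  have [_ dual] := Y_dualistic Tt.
  have [r [dr r01]] := dual (shiftN (size (fstretch t ++ a)) z).
  by exists r; split => //; rewrite -(app_shiftN cz); exact: density_is_region.
by exists 0; split; [exact: density_is_outside_tree nTc cz|left].
Qed.

Lemma offspring_density z :
    (~ stretchset (body T) z ->
       exists r, density_is mu A z r /\ (r = 0 \/ r = 1)) /\
    (forall x, body T x -> z = stretch x ->
       (density_defined mu A z <-> cvg ((fun n => psi (restr x n)) @ \oo)) /\
       (forall l, (fun n => psi (restr x n)) @ \oo --> l -> density_is mu A z l)).
Proof.
split=> [|x bx ->]; first exact: density_off_stretch.
split=> [|l]; last by move/(density_is_stretch l bx).
split=> [[r /(density_is_stretch r bx) hr]|/cvg_ex [l /(density_is_stretch l bx) hl]].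
  exact: cvgP hr.
by exists l.
Qed.

End Offspring.

End CoinTossing.

Theorem theorem3p13 (R : realType) (mu : {measure set BT -> \bar R})
  (mu_cyl : forall s : seq bool, mu (cyl s) = ((2 ^+ size s)^-1)%:E)
  (T : set (seq bool)) (HT : pruned_tree T)
  (psi : seq bool -> R) (Hpsi : forall t, T t -> 0 < psi t < 1)
  (D : seq bool -> set CS) (HD : compliant mu T D)
  (HDpsi : forall t, T t ->
     mu (interior (D t)) = (psi t)%:E /\ mu (closure (D t)) = (psi t)%:E) :
  forall A, A = closed_offspring T D \/ A = open_offspring T D ->
  forall z : CS,
    (~ stretchset (body T) z ->
       exists r, density_is mu A z r /\ (r = 0 \/ r = 1)) /\
    (forall x, body T x -> z = stretch x ->
       (density_defined mu A z <->
          cvg ((fun n => psi (restr x n)) @ \oo)) /\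
       (forall l, (fun n => psi (restr x n)) @ \oo --> l ->
          density_is mu A z l)).
Proof.
move=> A hA z; have [[t0 Tt0] T_prefix _] := HT.
have T_nil : T [::] by apply: (T_prefix _ t0 Tt0); rewrite /prefix_of take0.
have psi01 t : T t -> 0 <= psi t <= 1 by move=> /Hpsi /andP[? ?]; rewrite !ltW.
have dual t : T t -> dualistic mu (interior (D t)) /\ dualistic mu (closure (D t)).
  by move=> Tt; have [dt _ _ eIC] := HD t Tt; exact: dualistic_interior_closure.
case: hA => ->.
- apply: (@offspring_density _ _ mu_cyl _ (fun t => closure (D t))) => //.
  + by move=> u; right.
  + by move=> t Tt; apply: measurable_closed; exact: closed_closure.
  + by move=> t /HDpsi [].
  + by move=> t /dual [].
- apply: (@offspring_density _ _ mu_cyl _ (fun t => interior (D t))) => //.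
  + by move=> t Tt; apply: measurable_open; exact: open_interior.
  + by move=> t /HDpsi [].
  + by move=> t /dual [].
Qed.
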